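(* Let $\mathfrak{o}$ be a compact discrete valuation ring with finite residue field $\mathbf{k}$ of odd characteristic, $\mathfrak{O}/\mathfrak{o}$ the unramified quadratic extension with residue field $\mathbf{K}$, and $\ell\in\mathbb{N}$. Let $\mathbf{G}$ be $\mathrm{GL}_d$ or $\mathrm{GU}_d$ with Lie algebra $\mathfrak{g}$, $d=d_1+d_2$, and let $\mathbf{G}_i$ ($\mathrm{GL}_{d_i}$, resp. $\mathrm{GU}_{d_i}$) with Lie algebra $\mathfrak{g}_i$ be embedded block-diagonally via $j:\mathfrak{g}_1\oplus\mathfrak{g}_2\hookrightarrow\mathfrak{g}$, $j(X_1,X_2)=\mathrm{diag}(X_1,X_2)$, and $\mathbf{G}_1\times\mathbf{G}_2\hookrightarrow\mathbf{G}$. Let $\xi=j(\xi_1,\xi_2)\in\mathfrak{g}(\mathbf{k})$ with $\xi_i\in\mathfrak{g}_i(\mathbf{k})$ such that the characteristic polynomials of $\xi_1$ and $\xi_2$ are coprime in $\mathbf{K}[t]$. Then: (1) every $\tilde\xi\in\mathfrak{g}(\mathfrak{o}_\ell)$ reducing to $\xi$ modulo $\pi$ is $\mathrm{Ad}(\mathbf{G}(\mathfrak{o}_\ell))$-conjugate to an element $j(\tilde\xi_1,\tilde\xi_2)$ with $\tilde\xi_i\in\mathfrak{g}_i(\mathfrak{o}_\ell)$ reducing to $\xi_i$; (2) two such lifts $j(\tilde\xi_1,\tilde\xi_2)$ and $j(\tilde\eta_1,\tilde\eta_2)$ of $\xi$ are $\mathbf{G}(\mathfrak{o}_\ell)$-conjugate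 if and only if $\tilde\xi_i$ and $\tilde\eta_i$ are $\mathbf{G}_i(\mathfrak{o}_\ell)$-conjugate for $i=1,2$; moreover for $\tilde\xi=j(\tilde\xi_1,\tilde\xi_2)$, $$Z_{\mathbf{G}(\mathfrak{o}_\ell)}(\tilde\xi)=Z_{\mathbf{G}(\mathfrak{o}_\ell)}(\tilde\xi)\cap j(\mathbf{G}_1(\mathfrak{o}_\ell)\times\mathbf{G}_2(\mathfrak{o}_\ell))\cong Z_{\mathbf{G}_1(\mathfrak{o}_\ell)}(\tilde\xi_1)\times Z_{\mathbf{G}_2(\mathfrak{o}_\ell)}(\tilde\xi_2).$$ Consequently, there is a bijection between the $\mathrm{Ad}(\mathbf{G}(\mathfrak{o}_\ell))$-orbits in $\mathfrak{g}(\mathfrak{o}_\ell)$ lying over $\xi$ and pairs consisting of an $\mathrm{Ad}(\mathbf{G}_1(\mathfrak{o}_\ell))$-orbit in $\mathfrak{g}_1(\mathfrak{o}_\ell)$ lying over $\xi_1$ and an $\mathrm{Ad}(\mathbf{G}_2(\mathfrak{o}_\ell))$-orbit in $\mathfrak{g}_2(\mathfrak{o}_\ell)$ lying over $\xi_2$.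
   Context: $\pi$ is a uniformiser of $\mathfrak{o}$, $\mathfrak{o}_\ell=\mathfrak{o}/\pi^\ell\mathfrak{o}$, $\mathfrak{O}_\ell=\mathfrak{O}/\pi^\ell\mathfrak{O}$, and $x\mapsto x^\circ$ is the nontrivial Galois automorphism of $\mathfrak{O}/\mathfrak{o}$. Here unitary groups are taken with respect to the standard Hermitian involution $A\mapsto (a^\circ_{j,i})$, which preserves block-diagonal matrices: $\mathrm{GU}_n(\mathfrak{o}_\ell)=\{A\in\mathrm{GL}_n(\mathfrak{O}_\ell): (a^\circ_{j,i})A=I\}$ and $\mathfrak{gu}_n(\mathfrak{o}_\ell)=\{A\in\mathfrak{gl}_n(\mathfrak{O}_\ell): A+(a^\circ_{j,i})=0\}$. ''Lying over'' means reducing modulo $\pi$ to the given element. $Z$ denotes centraliser under conjugation. *)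

From HB Require Import structures.
From mathcomp Require Import all_boot all_order all_algebra.
Set Implicit Arguments. Unset Strict Implicit. Unset Printing Implicit Defensive.
Import GRing.Theory.
Local Open Scope ring_scope.

(* Elements of o_l = o/p^l o (resp. O_l) are represented by elements of o
   (resp. O); two representatives give the same element of the quotient iff
   their difference is divisible by p^l.  Matrices over o_l are represented by
   matrices over o, compared entrywise modulo p^l. *)

Definition pdvd (R : pzRingType) (p : R) (l : nat) (x : R) : Prop :=
  exists c : R, x = p ^+ l * c.

Definition congmx (R : pzRingType) (p : R) (l : nat) m n
  (A B : 'M[R]_(m, n)) : Prop :=
  forall i j, pdvd p l (A i j - B i j).

Definition inv_mod (R : pzRingType) (p : R) (l : nat) n (g h : 'M[R]_n) :=
  congmx p l (g *m h) 1%:M /\ congmx p l (h *m g) 1%:M.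

Definition is_dvr (R : idomainType) (p : R) : Prop :=
  [/\ p != 0, p \isn't a GRing.unit &
   forall x : R, x != 0 ->
     exists (n : nat) (u : R), u \is a GRing.unit /\ x = u * p ^+ n].

Definition is_complete (R : pzRingType) (p : R) : Prop :=
  forall s : nat -> R, (forall n, pdvd p n (s n.+1 - s n)) ->
    exists x : R, forall n, pdvd p n (x - s n).

Definition star (R : pzRingType) (s : R -> R) n (A : 'M[R]_n) : 'M[R]_n :=
  (map_mx s A)^T.

Definition GL_mem (R : pzRingType) (p : R) (l : nat) n (g : 'M[R]_n) : Prop :=
  exists h, inv_mod p l g h.
Definition gl_mem (R : pzRingType) (p : R) (l : nat) n (X : 'M[R]_n) : Prop :=
  True.
Definition GU_mem (R : pzRingType) (s : R -> R) (p : R) (l : nat) n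
  (g : 'M[R]_n) : Prop :=
  congmx p l (star s g *m g) 1%:M.
Definition gu_mem (R : pzRingType) (s : R -> R) (p : R) (l : nat) n
  (X : 'M[R]_n) : Prop :=
  congmx p l (X + star s X) 0.

Definition Adconj (R : pzRingType) (p : R) (l : nat)
  (inG : forall n, 'M[R]_n -> Prop) n (X Y : 'M[R]_n) : Prop :=
  exists g h, [/\ inG n g, inv_mod p l g h & congmx p l (g *m X *m h) Y].

Definition centralizes (R : pzRingType) (p : R) (l : nat) n (g X : 'M[R]_n)
  : Prop :=
  exists h, inv_mod p l g h /\ congmx p l (g *m X *m h) X.

(** The conclusion of the theorem for a given group scheme G (given by the
    predicates inG for G(o_l) and inLie for g(o_l) on matrices over R, the
    reduction map r : R -> K to the residue field, uniformiser p), for the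
    block embedding j(X1,X2) = block_mx X1 0 0 X2. *)
Definition levi_statement (R : pzRingType) (K : fieldType) (r : R -> K)
  (p : R) (l : nat) (inG inLie : forall n, 'M[R]_n -> Prop)
  (d1 d2 : nat) (xi1 : 'M[K]_d1) (xi2 : 'M[K]_d2) : Prop :=
  let over n (X : 'M[R]_n) (xi : 'M[K]_n) := inLie n X /\ map_mx r X = xi in
  let conj := Adconj p l inG in
  (forall X : 'M[R]_(d1 + d2), over _ X (block_mx xi1 0 0 xi2) ->
     exists (X1 : 'M[R]_d1) (X2 : 'M[R]_d2),
       [/\ over _ X1 xi1, over _ X2 xi2 & conj _ X (block_mx X1 0 0 X2)]) /\
  (forall (X1 Y1 : 'M[R]_d1) (X2 Y2 : 'M[R]_d2),
     over _ X1 xi1 -> over _ X2 xi2 -> over _ Y1 xi1 -> over _ Y2 xi2 ->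
     (conj _ (block_mx X1 0 0 X2) (block_mx Y1 0 0 Y2) <->
      conj _ X1 Y1 /\ conj _ X2 Y2)) /\
  (forall (X1 : 'M[R]_d1) (X2 : 'M[R]_d2), over _ X1 xi1 -> over _ X2 xi2 ->
     (forall g : 'M[R]_(d1 + d2), inG _ g ->
        centralizes p l g (block_mx X1 0 0 X2) ->
        exists (g1 : 'M[R]_d1) (g2 : 'M[R]_d2),
          [/\ inG _ g1, inG _ g2 & congmx p l g (block_mx g1 0 0 g2)]) /\
     (forall (g1 g1' : 'M[R]_d1) (g2 g2' : 'M[R]_d2),
        inG _ g1 -> inG _ g2 -> inG _ g1' -> inG _ g2' ->
        [/\ inG _ (block_mx g1 0 0 g2),
            (congmx p l (block_mx g1 0 0 g2) (block_mx g1' 0 0 g2') <->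
             congmx p l g1 g1' /\ congmx p l g2 g2') &
            (centralizes p l (block_mx g1 0 0 g2) (block_mx X1 0 0 X2) <->
             centralizes p l g1 X1 /\ centralizes p l g2 X2)])).

From HB Require Import structures.
From mathcomp Require Import all_boot all_order all_algebra.
Set Implicit Arguments. Unset Strict Implicit. Unset Printing Implicit Defensive.
Import GRing.Theory.
Local Open Scope ring_scope.

(* A lift X of diag(xi1, xi2) is conjugated to block-diagonal form one power
   of p at a time.  If X is block-diagonal modulo p^k, with diagonal blocks A,
   B and off-diagonal blocks p^k C, p^k D, conjugation by the Cayley transform
   of (p^k/2) [[0, Y], [Z, 0]] removes the off-diagonal blocks modulo p^(k+1)
   as soon as A Y - Y B = C and B Z - Z A = D.  These Sylvester equations are
   uniquely solvable over the base ring because the characteristic polynomials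
   of the reductions of A and B are coprime, which makes chi_A(B) invertible.
   In the unitary case one takes Z = -Y^*, so that the Cayley transform is
   unitary.  The same uniqueness shows that a matrix intertwining two
   block-diagonal lifts is block-diagonal modulo p^l, which gives the
   conjugacy and centraliser statements. *)

Section Congruence.
Variables (R : comPzRingType) (p : R).
Implicit Types (l : nat).

Lemma congmxP l m n (A B : 'M[R]_(m, n)) :
  congmx p l A B <-> exists C, A - B = p ^+ l *: C.
Proof.
split=> [cAB | [C AB_C] i j]; last first.
  by exists (C i j); have /matrixP/(_ i j) := AB_C; rewrite !mxE.
have cAB' i j : exists c, A i j - B i j == p ^+ l * c.
  by case: (cAB i j) => c ->; exists c.
exists (\matrix_(i, j) xchoose (cAB' i j)); apply/matrixP=> i j.
by rewrite !mxE; apply/eqP; exact: xchooseP (cAB' i j).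
Qed.

Lemma congmx0P l m n (A : 'M[R]_(m, n)) :
  congmx p l A 0 <-> exists C, A = p ^+ l *: C.
Proof.
split=> [/congmxP[C] | [C ->]]; first by rewrite subr0; exists C.
by apply/congmxP; exists C; rewrite subr0.
Qed.

Lemma congmx_sub0 l m n (A B : 'M[R]_(m, n)) :
  congmx p l (A - B) 0 <-> congmx p l A B.
Proof.
by split=> [/congmx0P[C AB_C] | /congmxP[C AB_C]]; [apply/congmxP | apply/congmx0P]; exists C.
Qed.

Lemma congmx_refl l m n (A : 'M[R]_(m, n)) : congmx p l A A.
Proof. by apply/congmxP; exists 0; rewrite subrr scaler0. Qed.

Lemma congmx_sym l m n (A B : 'M[R]_(m, n)) :
  congmx p l A B -> congmx p l B A.
Proof.
by case/congmxP=> C AB_C; apply/congmxP; exists (- C); rewrite scalerN -AB_C opprB.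
Qed.

Lemma congmx_trans l m n (A B C : 'M[R]_(m, n)) :
  congmx p l A B -> congmx p l B C -> congmx p l A C.
Proof.
case/congmxP=> D AB_D /congmxP[E BC_E]; apply/congmxP; exists (D + E).
by rewrite scalerDr -AB_D -BC_E addrA subrK.
Qed.

Lemma congmxD l m n (A A' B B' : 'M[R]_(m, n)) :
  congmx p l A A' -> congmx p l B B' -> congmx p l (A + B) (A' + B').
Proof.
case/congmxP=> D AA_D /congmxP[E BB_E]; apply/congmxP; exists (D + E).
by rewrite scalerDr -AA_D -BB_E opprD addrACA.
Qed.

Lemma congmxN l m n (A A' : 'M[R]_(m, n)) :
  congmx p l A A' -> congmx p l (- A) (- A').
Proof.
case/congmxP=> D AA_D; apply/congmxP; exists (- D).
by rewrite scalerN -AA_D opprB opprK addrC.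
Qed.

Lemma congmxB l m n (A A' B B' : 'M[R]_(m, n)) :
  congmx p l A A' -> congmx p l B B' -> congmx p l (A - B) (A' - B').
Proof. by move=> cA cB; apply: congmxD cA (congmxN cB). Qed.

Lemma congmxMl l m n k (A : 'M[R]_(m, n)) (B B' : 'M[R]_(n, k)) :
  congmx p l B B' -> congmx p l (A *m B) (A *m B').
Proof.
case/congmxP=> D BB_D; apply/congmxP; exists (A *m D).
by rewrite -mulmxBr BB_D scalemxAr.
Qed.

Lemma congmxMr l m n k (A A' : 'M[R]_(m, n)) (B : 'M[R]_(n, k)) :
  congmx p l A A' -> congmx p l (A *m B) (A' *m B).
Proof.
case/congmxP=> D AA_D; apply/congmxP; exists (D *m B).
by rewrite -mulmxBl AA_D scalemxAl.
Qed.

Lemma congmxM l m n k (A A' : 'M[R]_(m, n)) (B B' : 'M[R]_(n, k)) :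
  congmx p l A A' -> congmx p l B B' -> congmx p l (A *m B) (A' *m B').
Proof. by move=> cA cB; apply: congmx_trans (congmxMr _ cA) (congmxMl _ cB). Qed.

Lemma congmx_leq l l' m n (A B : 'M[R]_(m, n)) :
  (l' <= l)%N -> congmx p l A B -> congmx p l' A B.
Proof.
move=> le_l'l /congmxP[D AB_D]; apply/congmxP; exists (p ^+ (l - l') *: D).
by rewrite AB_D scalerA -exprD subnKC.
Qed.

Lemma congmx_exp0 l m n (C : 'M[R]_(m, n)) : congmx p l (p ^+ l *: C) 0.
Proof. by apply/congmx0P; exists C. Qed.

Lemma congmx_expZ k l m n (A B : 'M[R]_(m, n)) :
  congmx p l A B -> congmx p (k + l) (p ^+ k *: A) (p ^+ k *: B).
Proof.
case/congmxP=> D AB_D; apply/congmxP; exists D.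
by rewrite -scalerBr AB_D scalerA exprD.
Qed.

Lemma congmx_addexp k m n (A W : 'M[R]_(m, n)) :
  (0 < k)%N -> congmx p 1 (A + p ^+ k *: W) A.
Proof.
move=> k_gt0; apply/congmxP; exists (p ^+ k.-1 *: W).
by rewrite addrC addKr scalerA -exprD add1n prednK.
Qed.

Lemma congmx_block l m1 m2 n1 n2 (a a' : 'M[R]_(m1, n1)) (b b' : 'M[R]_(m1, n2))
  (c c' : 'M[R]_(m2, n1)) (d d' : 'M[R]_(m2, n2)) :
  congmx p l (block_mx a b c d) (block_mx a' b' c' d') <->
  [/\ congmx p l a a', congmx p l b b', congmx p l c c' & congmx p l d d'].
Proof.
split=> [/congmxP[D] | [/congmxP[D1 E1] /congmxP[D2 E2] /congmxP[D3 E3] /congmxP[D4 E4]]].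
  rewrite -(submxK D) opp_block_mx add_block_mx scale_block_mx.
  by case/eq_block_mx=> *; split; apply/congmxP; eexists; eassumption.
apply/congmxP; exists (block_mx D1 D2 D3 D4).
by rewrite opp_block_mx add_block_mx scale_block_mx E1 E2 E3 E4.
Qed.

Lemma congmx_diag l m1 m2 n1 n2 (a a' : 'M[R]_(m1, n1)) (d d' : 'M[R]_(m2, n2)) :
  congmx p l (block_mx a 0 0 d) (block_mx a' 0 0 d') <->
  congmx p l a a' /\ congmx p l d d'.
Proof.
split=> [/congmx_block[] // | [ca cd]].
by apply/congmx_block; split=> //; apply: congmx_refl.
Qed.

End Congruence.

Lemma congmx_cancel (R : idomainType) (p : R) k l m n (A : 'M[R]_(m, n)) :
  p != 0 -> (k <= l)%N -> congmx p l (p ^+ k *: A) 0 -> congmx p (l - k) A 0.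
Proof.
move=> p_neq0 le_kl /congmx0P[B]; rewrite -{1}(subnKC le_kl) exprD -scalerA => AB.
apply/congmx0P; exists B; apply/matrixP=> i j.
have /matrixP/(_ i j) := AB; rewrite !mxE; apply: mulfI; exact: expf_neq0.
Qed.

Lemma mulmx_diag (R : pzSemiRingType) m1 m2 n1 n2 k1 k2 (a : 'M[R]_(m1, n1))
  (b : 'M[R]_(m2, n2)) (c : 'M[R]_(n1, k1)) (d : 'M[R]_(n2, k2)) :
  block_mx a 0 0 b *m block_mx c 0 0 d = block_mx (a *m c) 0 0 (b *m d).
Proof. by rewrite mulmx_block !mulmx0 !mul0mx !addr0 !add0r. Qed.

Definition conj_by (R : pzRingType) (p : R) (l : nat) n (g h X Y : 'M[R]_n) :=
  inv_mod p l g h /\ congmx p l (g *m X *m h) Y.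

Section InverseModulo.
Variables (R : comPzRingType) (p : R) (l : nat).

Lemma inv_mod_congmx n (g g' h h' : 'M[R]_n) :
  congmx p l g g' -> congmx p l h h' -> inv_mod p l g h -> inv_mod p l g' h'.
Proof.
move=> cg ch [gh hg]; split.
  by apply: congmx_trans gh; apply: congmxM; apply: congmx_sym.
by apply: congmx_trans hg; apply: congmxM; apply: congmx_sym.
Qed.

Lemma inv_modM n (g g' h h' : 'M[R]_n) :
  inv_mod p l g h -> inv_mod p l g' h' -> inv_mod p l (g *m g') (h' *m h).
Proof.
move=> [gh hg] [gh' hg']; split.
  rewrite mulmxA -(mulmxA g); apply: congmx_trans gh; apply: congmxMr.
  by rewrite -[X in congmx _ _ _ X]mulmx1; apply: congmxMl.
rewrite mulmxA -(mulmxA h'); apply: congmx_trans hg'; apply: congmxMr.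
by rewrite -[X in congmx _ _ _ X]mulmx1; apply: congmxMl.
Qed.

Lemma inv_mod_diag n1 n2 (g1 h1 : 'M[R]_n1) (g2 h2 : 'M[R]_n2) :
  inv_mod p l (block_mx g1 0 0 g2) (block_mx h1 0 0 h2) <->
  inv_mod p l g1 h1 /\ inv_mod p l g2 h2.
Proof.
rewrite /inv_mod !mulmx_diag (scalar_mx_block n1 n2).
by split=> [[/congmx_diag[? ?] /congmx_diag[? ?]] | [[? ?] [? ?]]]; split=> //;
   apply/congmx_diag.
Qed.

Lemma inv_mod_diagl n1 n2 (g1 : 'M[R]_n1) (g2 : 'M[R]_n2) h :
  inv_mod p l (block_mx g1 0 0 g2) h ->
  inv_mod p l g1 (ulsubmx h) /\ inv_mod p l g2 (drsubmx h).
Proof.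
rewrite /inv_mod -{1 2}(submxK h) !mulmx_block !mulmx0 !mul0mx !addr0 !add0r.
by rewrite (scalar_mx_block n1 n2) => -[/congmx_block[? _ _ ?] /congmx_block[? _ _ ?]].
Qed.

Lemma conj_by_diag n1 n2 (g1 h1 X1 Y1 : 'M[R]_n1) (g2 h2 X2 Y2 : 'M[R]_n2) :
  conj_by p l (block_mx g1 0 0 g2) (block_mx h1 0 0 h2)
    (block_mx X1 0 0 X2) (block_mx Y1 0 0 Y2) <->
  conj_by p l g1 h1 X1 Y1 /\ conj_by p l g2 h2 X2 Y2.
Proof.
rewrite /conj_by !mulmx_diag.
split=> [[/inv_mod_diag[? ?] /congmx_diag[? ?]] | [[? ?] [? ?]]] //.
by split; [apply/inv_mod_diag | apply/congmx_diag].
Qed.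

Lemma conj_by_congmx n (g g' h h' X Y : 'M[R]_n) :
  congmx p l g g' -> congmx p l h h' -> conj_by p l g h X Y -> conj_by p l g' h' X Y.
Proof.
move=> cg ch [gh gXh]; split; first exact: inv_mod_congmx gh.
apply: congmx_trans gXh; apply: congmx_sym.
by apply: congmxM ch; apply: congmxMr.
Qed.

Lemma conj_by_intertwine n (g h X Y : 'M[R]_n) :
  conj_by p l g h X Y ->
  congmx p l (g *m X) (Y *m g) /\ congmx p l (h *m Y) (X *m h).
Proof.
move=> [[gh hg] gXh]; split.
  apply: (congmx_trans (B := g *m X *m (h *m g))).
    by rewrite -{1}[g *m X]mulmx1; apply/congmxMl/congmx_sym.
  by rewrite mulmxA; apply: congmxMr.
apply: (congmx_trans (B := h *m (g *m X *m h))).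
  by apply/congmxMl/congmx_sym.
by have := congmxMr h (congmxMr X hg); rewrite mul1mx !mulmxA.
Qed.

End InverseModulo.

Lemma horner_mx_sum (R : comNzRingType) n (A : 'M[R]_n.+1) q :
  horner_mx A q = \sum_(i < size q) q`_i *: A ^+ i.
Proof.
rewrite /horner_mx /horner_morph horner_coef size_map_inj_poly; last 2 first.
- by move=> a b /matrixP/(_ ord0 ord0); rewrite !mxE.
- by apply/matrixP=> i j; rewrite !mxE mul0rn.
by apply: eq_bigr => i _; rewrite coef_map /= -mul_scalar_mx.
Qed.

Section Sylvester.
Variables (R : comUnitRingType) (K : fieldType) (r : {rmorphism R -> K}).
Hypothesis unit_of_red : forall x, r x != 0 -> x \is a GRing.unit.

Section Operators.
Variables (n m : nat) (A : 'M[R]_n.+1) (B : 'M[R]_m.+1).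

Definition sylv (Y : 'M[R]_(n.+1, m.+1)) := A *m Y - Y *m B.

Fixpoint sylv_telescope k (C : 'M[R]_(n.+1, m.+1)) : 'M[R]_(n.+1, m.+1) :=
  if k is k'.+1 then A *m sylv_telescope k' C + C *m B ^+ k' else 0.

Definition sylv_poly (q : {poly R}) C := \sum_(i < size q) q`_i *: sylv_telescope i C.

Lemma expB_commute k : B ^+ k *m B = B *m B ^+ k.
Proof. by rewrite mulmxE -exprSr exprS. Qed.

Lemma sylv_exp k Y : A ^+ k *m Y - Y *m B ^+ k = sylv_telescope k (sylv Y).
Proof.
elim: k => [|k /= <-]; first by rewrite !expr0 mul1mx mulmx1 subrr.
rewrite /sylv exprS exprSr mulmxBr mulmxBl !mulmxA -!mulmxE -!(mulmxA Y).
by rewrite expB_commute addrA subrK.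
Qed.

Lemma sylv_telescopeC k C : sylv (sylv_telescope k C) = sylv_telescope k (sylv C).
Proof.
elim: k => [|k /= <-]; first by rewrite /sylv mulmx0 mul0mx subrr.
rewrite /sylv mulmxDr mulmxDl mulmxBl mulmxBr !mulmxA -!(mulmxA C) expB_commute.
by rewrite opprD !addrA; congr (_ + _); rewrite addrAC.
Qed.

Lemma sylv_telescopeZ k c C : sylv_telescope k (c *: C) = c *: sylv_telescope k C.
Proof. by elim: k => [|k /= ->]; rewrite ?scaler0 // scalerDr scalemxAr scalemxAl. Qed.

Lemma sylv_horner q Y :
  sylv_poly q (sylv Y) = horner_mx A q *m Y - Y *m horner_mx B q.
Proof.
rewrite /sylv_poly !horner_mx_sum mulmx_suml mulmx_sumr -sumrB.
by apply: eq_bigr => i _; rewrite -sylv_exp scalerBr scalemxAl scalemxAr.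
Qed.

Lemma sylv_polyC q C : sylv (sylv_poly q C) = sylv_poly q (sylv C).
Proof.
rewrite /sylv_poly /sylv mulmx_sumr mulmx_suml -sumrB; apply: eq_bigr => i _.
by rewrite -scalemxAr -scalemxAl -scalerBr -sylv_telescopeC.
Qed.

Lemma sylv_polyZ q c C : sylv_poly q (c *: C) = c *: sylv_poly q C.
Proof.
rewrite /sylv_poly scaler_sumr; apply: eq_bigr => i _.
by rewrite sylv_telescopeZ !scalerA mulrC.
Qed.

Hypothesis coprime_red :
  coprimep (char_poly (map_mx r A)) (char_poly (map_mx r B)).

Let Q := horner_mx B (char_poly A).

(* A Bezout identity u chi_A + v chi_B = 1 evaluated at r B, together with
   Cayley-Hamilton, shows that r (det Q) is nonzero. *)
Lemma charA_at_B_unit : Q \in unitmx.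
Proof.
rewrite unitmxE; apply: unit_of_red.
rewrite -det_map_mx map_horner_mx map_char_poly.
case/Bezout_eq1_coprimepP: coprime_red => -[u v] /= /(congr1 (horner_mx (map_mx r B))).
rewrite rmorphD !rmorphM /= Cayley_Hamilton mulr0 addr0 rmorph1.
move=> /(congr1 determinant); rewrite -mulmxE det_mulmx det1.
by move=> det1_uQ; apply/eqP=> detQ0; move: det1_uQ; rewrite detQ0 mulr0 => /eqP;
   rewrite eq_sym oner_eq0.
Qed.

Definition sylv_inv C := - (sylv_poly (char_poly A) C *m invmx Q).

Lemma sylvK : cancel sylv sylv_inv.
Proof.
move=> Y; rewrite /sylv_inv sylv_horner Cayley_Hamilton mul0mx sub0r mulNmx opprK.
by rewrite -/Q mulmxK // charA_at_B_unit.
Qed.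

Lemma sylv_invK : cancel sylv_inv sylv.
Proof.
have QB : B *m invmx Q = invmx Q *m B.
  have BQ : B *m Q = Q *m B by apply: comm_mx_horner.
  by rewrite -[RHS](mulmxK charA_at_B_unit) -(mulmxA _ B) BQ mulKmx ?charA_at_B_unit.
move=> C; rewrite /sylv_inv {1}/sylv mulmxN mulNmx opprK mulmxA.
set W := sylv_poly _ C.
rewrite -(mulmxA W) -QB mulmxA -mulNmx -mulmxDl addrC -opprB mulNmx -/(sylv W).
rewrite sylv_polyC sylv_horner Cayley_Hamilton mul0mx sub0r mulNmx opprK.
by rewrite -/Q mulmxK // charA_at_B_unit.
Qed.

Lemma sylv_invZ c C : sylv_inv (c *: C) = c *: sylv_inv C.
Proof. by rewrite /sylv_inv sylv_polyZ -scalemxAl scalerN. Qed.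

End Operators.

Lemma sylvester_inverse n m (A : 'M[R]_n) (B : 'M[R]_m) :
  coprimep (char_poly (map_mx r A)) (char_poly (map_mx r B)) ->
  exists T : 'M[R]_(n, m) -> 'M[R]_(n, m),
    [/\ forall Y, T (A *m Y - Y *m B) = Y,
        forall C, A *m T C - T C *m B = C &
        forall c C, T (c *: C) = c *: T C].
Proof.
case: n A => [|n] A; first by exists (fun _ => 0); split=> *; rewrite ?flatmx0 ?scaler0.
case: m B => [|m] B; first by exists (fun _ => 0); split=> *; rewrite ?thinmx0 ?scaler0.
by move=> cop; exists (sylv_inv A B); split; [apply: sylvK | apply: sylv_invK |
   apply: sylv_invZ].
Qed.

Lemma sylvester_congmx0 (p : R) l n m (A : 'M[R]_n) (B : 'M[R]_m) Y :
  coprimep (char_poly (map_mx r A)) (char_poly (map_mx r B)) ->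
  congmx p l (A *m Y - Y *m B) 0 -> congmx p l Y 0.
Proof.
case/sylvester_inverse=> T [TK _ TZ] /congmx0P[C SY_C].
by apply/congmx0P; exists (T C); rewrite -TZ -SY_C TK.
Qed.

Lemma sylvester_solve n m (A : 'M[R]_n) (B : 'M[R]_m) C :
  coprimep (char_poly (map_mx r A)) (char_poly (map_mx r B)) ->
  exists Y, A *m Y - Y *m B = C.
Proof. by case/sylvester_inverse=> T [_ KT _]; exists (T C). Qed.

End Sylvester.

Section Cayley.
Variables (R : comUnitRingType) (K : fieldType) (r : {rmorphism R -> K}) (p : R).
Hypothesis unit_of_red : forall x, r x != 0 -> x \is a GRing.unit.

Definition cayley n (M : 'M[R]_n) := (1%:M + M) *m invmx (1%:M - M).

Lemma unitmx_red1 n (M : 'M[R]_n) : map_mx r M = 1%:M -> M \in unitmx.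
Proof.
by move=> rM; rewrite unitmxE; apply: unit_of_red; rewrite -det_map_mx rM det1 oner_eq0.
Qed.

Lemma cayleyN n (M : 'M[R]_n) : map_mx r M = 0 ->
  cayley M *m cayley (- M) = 1%:M /\ cayley (- M) *m cayley M = 1%:M.
Proof.
move=> rM0; rewrite /cayley opprK.
have unit_sub : 1%:M - M \in unitmx.
  by apply: unitmx_red1; rewrite map_mxB rM0 map_mx1 subr0.
have unit_add : 1%:M + M \in unitmx.
  by apply: unitmx_red1; rewrite map_mxD rM0 map_mx1 addr0.
by rewrite !mulmxA !mulmxKV // !mulmxV.
Qed.

Hypothesis red_p : r p = 0.
Hypothesis unit2 : (2 : R) \is a GRing.unit.

Lemma map_mx_expZ0 k m n (N : 'M[R]_(m, n)) c :
  (0 < k)%N -> map_mx r ((p ^+ k * c) *: N) = 0.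
Proof.
by move=> k_gt0; rewrite map_mxZ rmorphM rmorphXn red_p expr0n gtn_eqF // mul0r scale0r.
Qed.

(* With M = (p^k/2) N we have 1 + M = (1 + 2M)(1 - M) + 2M^2 and 2M^2 = O(p^(2k)). *)
Lemma cayley_approx k n (N : 'M[R]_n) : (0 < k)%N ->
  congmx p k.+1 (cayley ((p ^+ k / 2) *: N)) (1%:M + p ^+ k *: N).
Proof.
move=> k_gt0; set M := (p ^+ k / 2) *: N.
have unit_sub : 1%:M - M \in unitmx.
  by apply: unitmx_red1; rewrite map_mxB map_mx_expZ0 // map_mx1 subr0.
have M2 : M + M = p ^+ k *: N.
  by rewrite -scalerDl -mulrDr -mulr2n -[_ *+ 2]mulr_natl mulrV ?mulr1.
have split1M : 1%:M + M = (1%:M + (M + M)) *m (1%:M - M) + (M + M) *m M.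
  by rewrite mulmxDl -addrA -mulmxDr subrK mulmx1 mul1mx addrA subrK.
apply/congmxP; exists (p ^+ k.-1 / 2 *: (N *m N *m invmx (1%:M - M))).
rewrite /cayley split1M mulmxDl mulmxK // M2 addrC addKr -!scalemxAl /M.
by rewrite -scalemxAr -scalemxAl !scalerA !mulrA -!exprD addSnnS prednK.
Qed.

Lemma cayley_conj_approx k n (N X : 'M[R]_n) : (0 < k)%N ->
  congmx p k.+1 (cayley ((p ^+ k / 2) *: N) *m X *m cayley (- ((p ^+ k / 2) *: N)))
                (X + p ^+ k *: (N *m X - X *m N)).
Proof.
move=> k_gt0; have cN := cayley_approx N k_gt0.
have := cayley_approx (- N) k_gt0; rewrite scalerN => cNN.
apply: congmx_trans (congmxM (congmxM cN (congmx_refl _ _ X)) cNN) _.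
apply/congmxP; exists (- (p ^+ k.-1 *: (N *m X *m N))).
rewrite mulmxDl mul1mx -scalemxAl mulmxDr mulmx1 mulmxDl -!scalemxAr -scalemxAl.
rewrite scalerA !mulmxN !scalerN scalerBr.
set a := p ^+ k *: _; set b := p ^+ k *: _; set c := (_ * _) *: _.
have -> : X + a + (- b + - c) - (X + (a - b)) = - c.
  by rewrite [X + (a - b)]addrA opprB addrCA addrAC subrr add0r addNKr.
by rewrite /c scalerA -!exprD addSnnS prednK.
Qed.

Lemma cayley_block_step k d1 d2 (A : 'M[R]_d1) (B : 'M[R]_d2) C D Y Z :
  (0 < k)%N ->
  congmx p 1 (A *m Y - Y *m B) C -> congmx p 1 (B *m Z - Z *m A) D ->
  let N := (p ^+ k / 2) *: block_mx 0 Y Z 0 in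
  exists A' B' C' D',
    [/\ cayley N *m block_mx A (p ^+ k *: C) (p ^+ k *: D) B *m cayley (- N)
        = block_mx A' (p ^+ k.+1 *: C') (p ^+ k.+1 *: D') B',
        congmx p 1 A' A & congmx p 1 B' B].
Proof.
move=> k_gt0 YC ZD N.
have := cayley_conj_approx (block_mx 0 Y Z 0)
  (block_mx A (p ^+ k *: C) (p ^+ k *: D) B) k_gt0.
rewrite -/N; set X' := _ *m _ *m _.
rewrite -(submxK X') !mulmx_block !mul0mx !mulmx0 !add0r !addr0.
rewrite opp_block_mx add_block_mx scale_block_mx add_block_mx.
case/congmx_block=> cA cC cD cB.
have offdiag W E : congmx p 1 W E ->
    congmx p k.+1 (p ^+ k *: E - p ^+ k *: W) 0.
  move=> cWE; rewrite -scalerBr -(scaler0 _ (p ^+ k)) -addn1; apply: congmx_expZ.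
  by apply/congmx_sub0/congmx_sym.
have [C' ->] : exists C', ursubmx X' = p ^+ k.+1 *: C'.
  apply/congmx0P; apply: congmx_trans cC _.
  by rewrite -[_ - A *m Y]opprB scalerN; apply: offdiag.
have [D' ->] : exists D', dlsubmx X' = p ^+ k.+1 *: D'.
  apply/congmx0P; apply: congmx_trans cD _.
  by rewrite -[_ - B *m Z]opprB scalerN; apply: offdiag.
exists (ulsubmx X'), (drsubmx X'), C', D'; split=> //.
- by apply: congmx_trans (congmx_addexp _ _ _ k_gt0); apply: congmx_leq cA.
- by apply: congmx_trans (congmx_addexp _ _ _ k_gt0); apply: congmx_leq cB.
Qed.

End Cayley.

Section Reduction.
Variables (R : comPzRingType) (K : fieldType) (r : {rmorphism R -> K}) (p : R).

Lemma congmx1_red (red_p : r p = 0) m n (A B : 'M[R]_(m, n)) :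
  congmx p 1 A B -> map_mx r A = map_mx r B.
Proof.
case/congmxP=> C AB_C; apply/eqP; rewrite -subr_eq0 -map_mxB AB_C map_mxZ.
by rewrite rmorphXn red_p expr1 scale0r.
Qed.

Lemma red0_congmx1 (dvd_of_red0 : forall x, r x = 0 -> pdvd p 1 x) m n
    (A : 'M[R]_(m, n)) :
  map_mx r A = 0 -> congmx p 1 A 0.
Proof.
by move=> /matrixP rA0 i j; rewrite mxE subr0; apply: dvd_of_red0; have := rA0 i j; rewrite !mxE.
Qed.

End Reduction.

Section Levi.
Variables (R : comUnitRingType) (K : fieldType) (r : {rmorphism R -> K}).
Variables (p : R) (l : nat).
Hypothesis unit_of_red : forall x, r x != 0 -> x \is a GRing.unit.
Hypothesis dvd_of_red0 : forall x, r x = 0 -> pdvd p 1 x.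
Hypothesis red_p : r p = 0.
Hypothesis unit2 : (2 : R) \is a GRing.unit.
Hypothesis l_gt0 : (0 < l)%N.
Variables (d1 d2 : nat) (xi1 : 'M[K]_d1) (xi2 : 'M[K]_d2).
Hypothesis coprime_xi : coprimep (char_poly xi1) (char_poly xi2).

Local Notation lift1 X := (map_mx r X = xi1).
Local Notation lift2 X := (map_mx r X = xi2).

Lemma intertwine_diag (X1 Y1 : 'M[R]_d1) (X2 Y2 : 'M[R]_d2) g :
  lift1 X1 -> lift1 Y1 -> lift2 X2 -> lift2 Y2 ->
  congmx p l (g *m block_mx X1 0 0 X2) (block_mx Y1 0 0 Y2 *m g) ->
  congmx p l g (block_mx (ulsubmx g) 0 0 (drsubmx g)).
Proof.
move=> rX1 rY1 rX2 rY2; rewrite -[g in congmx _ _ (g *m _) (_ *m g)]submxK.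
rewrite !mulmx_block !mulmx0 !mul0mx !addr0 !add0r => /congmx_block[_ c12 c21 _].
rewrite -{1}(submxK g); apply/congmx_block; split; try apply: congmx_refl.
  apply: (sylvester_congmx0 unit_of_red (A := Y1) (B := X2)); first by rewrite rY1 rX2.
  by apply/congmx_sub0/congmx_sym.
apply: (sylvester_congmx0 unit_of_red (A := Y2) (B := X1)).
  by rewrite rY2 rX1 coprimep_sym.
by apply/congmx_sub0/congmx_sym.
Qed.

Lemma conj_by_split (X1 Y1 : 'M[R]_d1) (X2 Y2 : 'M[R]_d2) g h :
  lift1 X1 -> lift1 Y1 -> lift2 X2 -> lift2 Y2 ->
  conj_by p l g h (block_mx X1 0 0 X2) (block_mx Y1 0 0 Y2) ->
  [/\ congmx p l g (block_mx (ulsubmx g) 0 0 (drsubmx g)),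
      conj_by p l (ulsubmx g) (ulsubmx h) X1 Y1 &
      conj_by p l (drsubmx g) (drsubmx h) X2 Y2].
Proof.
move=> rX1 rY1 rX2 rY2 cgh; have [gXY hYX] := conj_by_intertwine cgh.
have g_diag := intertwine_diag rX1 rY1 rX2 rY2 gXY.
have h_diag := intertwine_diag rY1 rX1 rY2 rX2 hYX.
by have /conj_by_diag[] := conj_by_congmx g_diag h_diag cgh.
Qed.

Variables (inG inLie : forall n, 'M[R]_n -> Prop).
Hypothesis G_1 : forall n, inG (1%:M : 'M[R]_n).
Hypothesis G_congmx : forall n (g g' : 'M[R]_n), congmx p l g g' -> inG g -> inG g'.
Hypothesis G_diag : forall n1 n2 (g1 : 'M[R]_n1) (g2 : 'M[R]_n2),
  inG (block_mx g1 0 0 g2) <-> inG g1 /\ inG g2.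
Hypothesis G_mul : forall n (g g' : 'M[R]_n), inG g -> inG g' -> inG (g *m g').
Hypothesis L_congmx : forall n (X X' : 'M[R]_n), congmx p l X X' -> inLie X -> inLie X'.
Hypothesis L_diag : forall n1 n2 (X1 : 'M[R]_n1) (X2 : 'M[R]_n2),
  inLie (block_mx X1 0 0 X2) <-> inLie X1 /\ inLie X2.
Hypothesis L_conj : forall n (g h X : 'M[R]_n),
  inG g -> inv_mod p l g h -> inLie X -> inLie (g *m X *m h).
(* The group-specific input: the Cayley transform killing the off-diagonal
   blocks at level k can be chosen inside G, up to changing Z modulo p. *)
Hypothesis G_cayley : forall k (A : 'M[R]_d1) (B : 'M[R]_d2) C D Y Z,
  (0 < k)%N -> (k < l)%N -> lift1 A -> lift2 B ->
  inLie (block_mx A (p ^+ k *: C) (p ^+ k *: D) B) ->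
  A *m Y - Y *m B = C -> B *m Z - Z *m A = D ->
  exists2 Z', inG (cayley ((p ^+ k / 2) *: block_mx 0 Y Z' 0)) & congmx p 1 Z' Z.

Definition block_diag_upto k (X : 'M[R]_(d1 + d2)) :=
  exists g h A B C D, [/\ g *m h = 1%:M /\ h *m g = 1%:M, inG g,
    g *m X *m h = block_mx A (p ^+ k *: C) (p ^+ k *: D) B, lift1 A & lift2 B].

Lemma block_diag_upto1 X : map_mx r X = block_mx xi1 0 0 xi2 -> block_diag_upto 1 X.
Proof.
move=> rX.
have [C XC] : exists C, ursubmx X = p ^+ 1 *: C.
  by apply/congmx0P/(red0_congmx1 dvd_of_red0); rewrite map_ursubmx rX block_mxKur.
have [D XD] : exists D, dlsubmx X = p ^+ 1 *: D.
  by apply/congmx0P/(red0_congmx1 dvd_of_red0); rewrite map_dlsubmx rX block_mxKdl.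
exists 1%:M, 1%:M, (ulsubmx X), (drsubmx X), C, D; split.
- by rewrite mulmx1.
- exact: G_1.
- by rewrite mulmx1 mul1mx -XC -XD submxK.
- by rewrite map_ulsubmx rX block_mxKul.
- by rewrite map_drsubmx rX block_mxKdr.
Qed.

Lemma block_diag_uptoS k X : (0 < k)%N -> (k < l)%N -> inLie X ->
  block_diag_upto k X -> block_diag_upto k.+1 X.
Proof.
move=> k_gt0 lt_kl LX [g [h [A [B [C [D [[gh hg] Gg gXh rA rB]]]]]]].
have [Y AYC] : exists Y, A *m Y - Y *m B = C.
  by apply: (sylvester_solve unit_of_red); rewrite rA rB.
have [Z BZD] : exists Z, B *m Z - Z *m A = D.
  by apply: (sylvester_solve unit_of_red); rewrite rA rB coprimep_sym.
have LX' : inLie (block_mx A (p ^+ k *: C) (p ^+ k *: D) B).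
  by rewrite -gXh; apply: L_conj => //; split; rewrite ?gh ?hg; apply: congmx_refl.
have [Z' GN Z'Z] := G_cayley k_gt0 lt_kl rA rB LX' AYC BZD.
have AYC1 : congmx p 1 (A *m Y - Y *m B) C by rewrite AYC; apply: congmx_refl.
have BZ'D1 : congmx p 1 (B *m Z' - Z' *m A) D.
  by rewrite -BZD; apply: congmxB; [apply: congmxMl | apply: congmxMr].
have [A' [B' [C' [D' [NXN A'A B'B]]]]] :=
  cayley_block_step unit_of_red red_p unit2 k_gt0 AYC1 BZ'D1.
move: GN NXN; set N := _ *: block_mx _ _ _ _ => GN NXN.
have [NN' N'N] : cayley N *m cayley (- N) = 1%:M /\ cayley (- N) *m cayley N = 1%:M.
  exact/(cayleyN unit_of_red)/(map_mx_expZ0 red_p).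
exists (cayley N *m g), (h *m cayley (- N)), A', B', C', D'; split.
- by rewrite mulmxA -(mulmxA _ g) gh mulmx1 NN' mulmxA -(mulmxA h) N'N mulmx1.
- exact: G_mul.
- by rewrite -NXN -gXh !mulmxA.
- by rewrite (congmx1_red red_p A'A).
- by rewrite (congmx1_red red_p B'B).
Qed.

Lemma block_diag_upto_l X :
  inLie X -> map_mx r X = block_mx xi1 0 0 xi2 -> block_diag_upto l X.
Proof.
move=> LX rX; suff: forall k, (0 < k)%N -> (k <= l)%N -> block_diag_upto k X by apply.
elim=> [// | [_ _ _ | k IH _ lt_kl]]; first exact: block_diag_upto1.
by apply: block_diag_uptoS => //; apply: IH => //; apply: ltnW.
Qed.

Lemma conj_diag_lift X : inLie X -> map_mx r X = block_mx xi1 0 0 xi2 ->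
  exists X1 X2, [/\ inLie X1 /\ lift1 X1, inLie X2 /\ lift2 X2 &
                    Adconj p l inG X (block_mx X1 0 0 X2)].
Proof.
move=> LX rX; have [g [h [A [B [C [D [[gh hg] Gg gXh rA rB]]]]]]] := block_diag_upto_l LX rX.
have gh_l : inv_mod p l g h by split; rewrite ?gh ?hg; apply: congmx_refl.
have gXh_AB : congmx p l (g *m X *m h) (block_mx A 0 0 B).
  by rewrite gXh; apply/congmx_block; split; apply: congmx_refl || apply: congmx_exp0.
have /L_diag[LA LB] := L_congmx gXh_AB (L_conj Gg gh_l LX).
by exists A, B; split=> //; exists g, h.
Qed.

Lemma Adconj_diag (X1 Y1 : 'M[R]_d1) (X2 Y2 : 'M[R]_d2) :
  lift1 X1 -> lift1 Y1 -> lift2 X2 -> lift2 Y2 ->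
  Adconj p l inG (block_mx X1 0 0 X2) (block_mx Y1 0 0 Y2) <->
  Adconj p l inG X1 Y1 /\ Adconj p l inG X2 Y2.
Proof.
move=> rX1 rY1 rX2 rY2; split=> [[g [h [Gg gh gXh]]] | ].
  have [g_diag [gh1 gXh1] [gh2 gXh2]] := conj_by_split rX1 rY1 rX2 rY2 (conj gh gXh).
  have /G_diag[Gg1 Gg2] := G_congmx g_diag Gg.
  by split; [exists (ulsubmx g), (ulsubmx h) | exists (drsubmx g), (drsubmx h)].
case=> -[g1 [h1 [Gg1 gh1 gXh1]]] [g2 [h2 [Gg2 gh2 gXh2]]].
have [] : conj_by p l (block_mx g1 0 0 g2) (block_mx h1 0 0 h2)
    (block_mx X1 0 0 X2) (block_mx Y1 0 0 Y2) by apply/conj_by_diag.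
by exists (block_mx g1 0 0 g2), (block_mx h1 0 0 h2); split=> //; apply/G_diag.
Qed.

Lemma centralizes_diag_split (X1 : 'M[R]_d1) (X2 : 'M[R]_d2) g :
  lift1 X1 -> lift2 X2 -> inG g -> centralizes p l g (block_mx X1 0 0 X2) ->
  exists g1 g2, [/\ inG g1, inG g2 & congmx p l g (block_mx g1 0 0 g2)].
Proof.
move=> rX1 rX2 Gg [h ghX]; have [g_diag _ _] := conj_by_split rX1 rX1 rX2 rX2 ghX.
have /G_diag[Gg1 Gg2] := G_congmx g_diag Gg.
by exists (ulsubmx g), (drsubmx g).
Qed.

Lemma centralizes_diag (X1 g1 : 'M[R]_d1) (X2 g2 : 'M[R]_d2) :
  lift1 X1 -> lift2 X2 ->
  centralizes p l (block_mx g1 0 0 g2) (block_mx X1 0 0 X2) <->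
  centralizes p l g1 X1 /\ centralizes p l g2 X2.
Proof.
move=> rX1 rX2; split=> [[h ghX] | [[h1 gh1] [h2 gh2]]].
  have [_] := conj_by_split rX1 rX1 rX2 rX2 ghX.
  by rewrite block_mxKul block_mxKdr => gh1 gh2; split; eexists; eassumption.
by exists (block_mx h1 0 0 h2); apply/conj_by_diag.
Qed.

Theorem levi_decomposition : levi_statement r p l inG inLie xi1 xi2.
Proof.
split; [|split].
- by move=> X [LX rX]; apply: conj_diag_lift.
- by move=> X1 Y1 X2 Y2 [_ rX1] [_ rX2] [_ rY1] [_ rY2]; apply: Adconj_diag.
move=> X1 X2 [_ rX1] [_ rX2]; split=> [g | ]; first exact: centralizes_diag_split.
move=> g1 g1' g2 g2' Gg1 Gg2 _ _.
by split; [exact/G_diag | exact: congmx_diag | exact: centralizes_diag].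
Qed.

End Levi.

Section DVR.
Variables (R : idomainType) (K : fieldType) (r : {rmorphism R -> K}) (p : R).
Hypotheses (dvr_p : is_dvr p) (red_p : r p = 0).

Lemma dvr_unit_of_red x : r x != 0 -> x \is a GRing.unit.
Proof.
have [_ _ dvr_x] := dvr_p; move=> rx_neq0.
have x_neq0 : x != 0 by apply: contraNneq rx_neq0 => ->; rewrite rmorph0.
move: rx_neq0; have [[|n] [u [u_unit ->]]] := dvr_x x x_neq0; first by rewrite mulr1.
by rewrite rmorphM rmorphXn red_p expr0n mulr0 eqxx.
Qed.

Lemma dvr_dvd_of_red0 x : r x = 0 -> pdvd p 1 x.
Proof.
have [_ _ dvr_x] := dvr_p; move=> rx0.
have [-> | x_neq0] := eqVneq x 0; first by exists 0; rewrite mulr0.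
have [[|n] [u [u_unit x_up]]] := dvr_x x x_neq0.
  by move: (rmorph_unit r u_unit); rewrite expr0 mulr1 in x_up; rewrite -x_up rx0 unitr0.
by exists (u * p ^+ n); rewrite x_up exprS expr1 mulrCA.
Qed.

Lemma dvr_unit2 : ~~ (2%N \in [pchar K]) -> (2 : R) \is a GRing.unit.
Proof.
by move=> char_neq2; apply: dvr_unit_of_red; rewrite rmorph_nat; move: char_neq2; rewrite inE.
Qed.

End DVR.

Section GL.
Variables (R : comPzRingType) (p : R) (l : nat).

Lemma GL_mem1 n : GL_mem p l (1%:M : 'M[R]_n).
Proof. by exists 1%:M; split; rewrite mulmx1; apply: congmx_refl. Qed.

Lemma GL_mem_congmx n (g g' : 'M[R]_n) :
  congmx p l g g' -> GL_mem p l g -> GL_mem p l g'.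
Proof. by move=> gg' [h gh]; exists h; apply: inv_mod_congmx gh => //; apply: congmx_refl. Qed.

Lemma GL_mem_diag n1 n2 (g1 : 'M[R]_n1) (g2 : 'M[R]_n2) :
  GL_mem p l (block_mx g1 0 0 g2) <-> GL_mem p l g1 /\ GL_mem p l g2.
Proof.
split=> [[h /inv_mod_diagl[gh1 gh2]] | [[h1 gh1] [h2 gh2]]].
  by split; eexists; eassumption.
by exists (block_mx h1 0 0 h2); apply/inv_mod_diag.
Qed.

Lemma GL_memM n (g g' : 'M[R]_n) :
  GL_mem p l g -> GL_mem p l g' -> GL_mem p l (g *m g').
Proof. by move=> [h gh] [h' gh']; exists (h' *m h); apply: inv_modM. Qed.

End GL.

Theorem levi_GL (R : idomainType) (K : fieldType) (r : {rmorphism R -> K}) (p : R)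
    l d1 d2 (xi1 : 'M[K]_d1) (xi2 : 'M[K]_d2) :
  is_dvr p -> r p = 0 -> ~~ (2%N \in [pchar K]) -> (0 < l)%N ->
  coprimep (char_poly xi1) (char_poly xi2) ->
  levi_statement r p l (fun n (g : 'M[R]_n) => GL_mem p l g)
    (fun n (X : 'M[R]_n) => gl_mem p l X) xi1 xi2.
Proof.
move=> dvr_p red_p char_neq2 l_gt0 coprime_xi.
have unit_of_red := dvr_unit_of_red dvr_p red_p.
apply: (levi_decomposition unit_of_red (dvr_dvd_of_red0 dvr_p) red_p
  (dvr_unit2 dvr_p red_p char_neq2) l_gt0 coprime_xi
  (inG := fun n (g : 'M[R]_n) => GL_mem p l g)) => //.
- exact: GL_mem1.
- exact: GL_mem_congmx.
- exact: GL_mem_diag.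
- exact: GL_memM.
move=> k A B C D Y Z k_gt0 *; exists Z; last exact: congmx_refl.
set N := (p ^+ k / 2) *: block_mx 0 Y Z 0.
have [NN' N'N] : cayley N *m cayley (- N) = 1%:M /\ cayley (- N) *m cayley N = 1%:M.
  exact/(cayleyN unit_of_red)/(map_mx_expZ0 red_p).
exists (cayley (- N)).
by split; [rewrite NN' | rewrite N'N]; apply: congmx_refl.
Qed.

Section Star.
Variables (R : comPzRingType) (s : {rmorphism R -> R}).

Definition mxstar m n (A : 'M[R]_(m, n)) : 'M[R]_(n, m) := (map_mx s A)^T.

Lemma mxstarM m n k (A : 'M[R]_(m, n)) (B : 'M[R]_(n, k)) :
  mxstar (A *m B) = mxstar B *m mxstar A.
Proof. by rewrite /mxstar map_mxM trmx_mul. Qed.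

Lemma mxstarD m n (A B : 'M[R]_(m, n)) : mxstar (A + B) = mxstar A + mxstar B.
Proof. by apply/matrixP=> i j; rewrite !mxE rmorphD. Qed.

Lemma mxstarN m n (A : 'M[R]_(m, n)) : mxstar (- A) = - mxstar A.
Proof. by apply/matrixP=> i j; rewrite !mxE rmorphN. Qed.

Lemma mxstarB m n (A B : 'M[R]_(m, n)) : mxstar (A - B) = mxstar A - mxstar B.
Proof. by rewrite mxstarD mxstarN. Qed.

Lemma mxstarZ m n c (A : 'M[R]_(m, n)) : mxstar (c *: A) = s c *: mxstar A.
Proof. by apply/matrixP=> i j; rewrite !mxE rmorphM. Qed.

Lemma mxstar0 m n : mxstar (0 : 'M[R]_(m, n)) = 0.
Proof. by apply/matrixP=> i j; rewrite !mxE rmorph0. Qed.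

Lemma mxstar1 n : mxstar (1%:M : 'M[R]_n) = 1%:M.
Proof. by apply/matrixP=> i j; rewrite !mxE eq_sym rmorph_nat. Qed.

Lemma mxstar_block m1 m2 n1 n2 (a : 'M[R]_(m1, n1)) (b : 'M[R]_(m1, n2))
  (c : 'M[R]_(m2, n1)) (d : 'M[R]_(m2, n2)) :
  mxstar (block_mx a b c d) = block_mx (mxstar a) (mxstar c) (mxstar b) (mxstar d).
Proof. by rewrite /mxstar map_block_mx tr_block_mx. Qed.

Lemma mxstarK (s_inv : involutive s) m n : cancel (@mxstar m n) (@mxstar n m).
Proof. by move=> A; apply/matrixP=> i j; rewrite !mxE s_inv. Qed.

Lemma congmx_mxstar (p : R) (s_p : s p = p) k m n (A B : 'M[R]_(m, n)) :
  congmx p k A B -> congmx p k (mxstar A) (mxstar B).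
Proof.
case/congmxP=> C AB_C; apply/congmxP; exists (mxstar C).
by rewrite -mxstarB AB_C mxstarZ rmorphXn s_p.
Qed.

End Star.

Section GU.
Variables (R : comPzRingType) (s : {rmorphism R -> R}) (p : R) (l : nat).
Hypotheses (s_inv : involutive s) (s_p : s p = p).

Lemma GU_memE n (g : 'M[R]_n) : GU_mem s p l g = congmx p l (mxstar s g *m g) 1%:M.
Proof. by []. Qed.

Lemma gu_memE n (X : 'M[R]_n) : gu_mem s p l X = congmx p l (X + mxstar s X) 0.
Proof. by []. Qed.

Lemma GU_mem1 n : GU_mem s p l (1%:M : 'M[R]_n).
Proof. by rewrite GU_memE mxstar1 mulmx1; apply: congmx_refl. Qed.

Lemma GU_mem_congmx n (g g' : 'M[R]_n) :
  congmx p l g g' -> GU_mem s p l g -> GU_mem s p l g'.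
Proof.
move=> gg' ggU; apply: congmx_trans ggU; apply: congmxM; last exact: congmx_sym.
by apply/(congmx_mxstar s_p)/congmx_sym.
Qed.

Lemma GU_mem_diag n1 n2 (g1 : 'M[R]_n1) (g2 : 'M[R]_n2) :
  GU_mem s p l (block_mx g1 0 0 g2) <-> GU_mem s p l g1 /\ GU_mem s p l g2.
Proof.
by rewrite !GU_memE mxstar_block !mxstar0 mulmx_diag (scalar_mx_block n1 n2);
   apply: congmx_diag.
Qed.

Lemma GU_memM n (g g' : 'M[R]_n) :
  GU_mem s p l g -> GU_mem s p l g' -> GU_mem s p l (g *m g').
Proof.
rewrite !GU_memE mxstarM => gU g'U; rewrite mulmxA -(mulmxA _ (mxstar s g)).
apply: congmx_trans g'U; apply: congmxMr.
by rewrite -[X in congmx _ _ _ X]mulmx1; apply: congmxMl.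
Qed.

Lemma GU_inv_mod n (g h : 'M[R]_n) :
  GU_mem s p l g -> inv_mod p l g h -> congmx p l h (mxstar s g).
Proof.
move=> gU [gh _]; apply: (congmx_trans (B := mxstar s g *m g *m h)).
  by rewrite -{1}[h]mul1mx; apply/congmxMr/congmx_sym.
by rewrite -mulmxA -[X in congmx _ _ _ X]mulmx1; apply: congmxMl.
Qed.

Lemma gu_mem_congmx n (X X' : 'M[R]_n) :
  congmx p l X X' -> gu_mem s p l X -> gu_mem s p l X'.
Proof.
move=> XX' Xu; apply: congmx_trans Xu; apply: congmxD; apply: congmx_sym => //.
exact: congmx_mxstar.
Qed.

Lemma gu_mem_diag n1 n2 (X1 : 'M[R]_n1) (X2 : 'M[R]_n2) :
  gu_mem s p l (block_mx X1 0 0 X2) <-> gu_mem s p l X1 /\ gu_mem s p l X2.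
Proof.
rewrite !gu_memE mxstar_block !mxstar0 add_block_mx !addr0.
by rewrite -(@block_mx0 R n1 n2 n1 n2); apply: congmx_diag.
Qed.

Lemma gu_mem_conj n (g h X : 'M[R]_n) : GU_mem s p l g -> inv_mod p l g h ->
  gu_mem s p l X -> gu_mem s p l (g *m X *m h).
Proof.
move=> gU gh Xu; have h_star := GU_inv_mod gU gh.
have star_h : congmx p l (mxstar s h) g.
  by rewrite -[X in congmx _ _ _ X](mxstarK s_inv); apply: congmx_mxstar.
rewrite !gu_memE.
apply: (congmx_trans (B := g *m X *m mxstar s g + g *m mxstar s X *m mxstar s g)).
  apply: congmxD; first exact: congmxMl h_star.
  rewrite !mxstarM mulmxA.
  by apply: congmxM (congmx_refl _ _ _); apply: congmxMr star_h.
rewrite -mulmxDl -mulmxDr -[X in congmx _ _ _ X](mul0mx _ (mxstar s g)).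
by apply: congmxMr; rewrite -(mulmx0 _ g); apply: congmxMl.
Qed.

End GU.

Section UnitaryCayley.
Variables (R : idomainType) (K : fieldType) (r : {rmorphism R -> K}).
Variables (s : {rmorphism R -> R}) (p : R) (l : nat).
Hypotheses (s_inv : involutive s) (s_p : s p = p).
Hypothesis unit_of_red : forall x, r x != 0 -> x \is a GRing.unit.
Hypotheses (red_p : r p = 0) (unit2 : (2 : R) \is a GRing.unit) (p_neq0 : p != 0).

Lemma cayley_unitary n (M : 'M[R]_n) : map_mx r M = 0 -> mxstar s M = - M ->
  mxstar s (cayley M) *m cayley M = 1%:M.
Proof.
move=> rM0 skewM.
have unit_sub : 1%:M - M \in unitmx.
  by apply: (unitmx_red1 unit_of_red); rewrite map_mxB rM0 map_mx1 subr0.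
have unit_add : 1%:M + M \in unitmx.
  by apply: (unitmx_red1 unit_of_red); rewrite map_mxD rM0 map_mx1 addr0.
have star_add : mxstar s (1%:M + M) = 1%:M - M by rewrite mxstarD mxstar1 skewM.
have star_sub : mxstar s (1%:M - M) = 1%:M + M by rewrite mxstarB mxstar1 skewM opprK.
have star_inv : mxstar s (invmx (1%:M - M)) = invmx (1%:M + M).
  have inv_star : (1%:M + M) *m mxstar s (invmx (1%:M - M)) = 1%:M.
    by rewrite -star_sub -mxstarM mulVmx // mxstar1.
  by rewrite -[LHS](mulKmx unit_add) inv_star mulmx1.
have add_sub_comm : (1%:M - M) *m (1%:M + M) = (1%:M + M) *m (1%:M - M).
  rewrite mulmxBl mulmxDl !mul1mx !mulmxDr !mulmx1 mulmxN.
  by rewrite opprD !addrA addrK subrK.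
rewrite /cayley mxstarM star_inv star_add mulmxA -(mulmxA _ (1%:M - M)) add_sub_comm.
by rewrite mulmxA mulVmx // mul1mx mulmxV.
Qed.

Lemma gu_block_skew k d1 d2 (A : 'M[R]_d1) (B : 'M[R]_d2) C D :
  (0 < k < l)%N -> gu_mem s p l (block_mx A (p ^+ k *: C) (p ^+ k *: D) B) ->
  [/\ congmx p 1 (mxstar s A) (- A), congmx p 1 (mxstar s B) (- B)
    & congmx p 1 D (- mxstar s C)].
Proof.
case/andP=> k_gt0 lt_kl; have l_gt1 : (1 < l)%N by apply: leq_ltn_trans lt_kl.
rewrite gu_memE mxstar_block add_block_mx -(@block_mx0 R d1 d2 d1 d2).
case/congmx_block=> AA _ DC BB.
have skew_mod1 m (E : 'M[R]_m) :
    congmx p l (E + mxstar s E) 0 -> congmx p 1 (mxstar s E) (- E).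
  move=> EE; apply/congmx_sub0; rewrite opprK addrC.
  by apply: congmx_leq EE; apply: ltnW.
split; [exact: skew_mod1 | exact: skew_mod1 |].
rewrite mxstarZ rmorphXn s_p -scalerDr in DC.
have /(_ 1%N) := congmx_leq _ (congmx_cancel p_neq0 (ltnW lt_kl) DC).
by rewrite subn_gt0 => /(_ lt_kl) DC1; apply/congmx_sub0; rewrite opprK.
Qed.

Lemma s_half : s 2^-1 = 2^-1.
Proof. by rewrite rmorphV // rmorph_nat. Qed.

Lemma GU_cayley d1 d2 (xi1 : 'M[K]_d1) (xi2 : 'M[K]_d2) :
  coprimep (char_poly xi1) (char_poly xi2) ->
  forall k (A : 'M[R]_d1) (B : 'M[R]_d2) C D Y Z, (0 < k)%N -> (k < l)%N ->
  map_mx r A = xi1 -> map_mx r B = xi2 ->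
  gu_mem s p l (block_mx A (p ^+ k *: C) (p ^+ k *: D) B) ->
  A *m Y - Y *m B = C -> B *m Z - Z *m A = D ->
  exists2 Z', GU_mem s p l (cayley ((p ^+ k / 2) *: block_mx 0 Y Z' 0))
            & congmx p 1 Z' Z.
Proof.
move=> coprime_xi k A B C D Y Z k_gt0 lt_kl rA rB Lblk AYC BZD.
have [AA BB DC] := gu_block_skew (D := D) (introT andP (conj k_gt0 lt_kl)) Lblk.
exists (- mxstar s Y).
  rewrite GU_memE cayley_unitary ?map_mx_expZ0 //; first exact: congmx_refl.
  rewrite mxstarZ mxstar_block !mxstar0 mxstarN (mxstarK s_inv) rmorphM rmorphXn s_p.
  by rewrite s_half -scalerN opp_block_mx !oppr0 opprK.
set W := - mxstar s Y.
have starC : congmx p 1 (mxstar s C) (mxstar s Y *m (- A) - (- B) *m mxstar s Y).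
  rewrite -AYC mxstarB !mxstarM.
  by apply: congmxB; [apply: congmxMl AA | apply: congmxMr BB].
have WD : congmx p 1 (B *m W - W *m A) D.
  have -> : B *m W - W *m A = - (mxstar s Y *m (- A) - (- B) *m mxstar s Y).
    by rewrite !mulmxN !mulNmx !opprK opprD opprK addrC.
  by apply: congmx_sym; apply: congmx_trans DC (congmxN starC).
apply/congmx_sub0/(sylvester_congmx0 unit_of_red (A := B) (B := A)).
  by rewrite rA rB coprimep_sym.
have -> : B *m (W - Z) - (W - Z) *m A = (B *m W - W *m A) - (B *m Z - Z *m A).
  by rewrite mulmxBr mulmxBl !opprB !addrA [LHS]addrAC (addrAC (B *m W)) [RHS]addrAC.
by rewrite BZD -(subrr D); apply: congmxB WD (congmx_refl _ _ _).
Qed.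

End UnitaryCayley.

Theorem levi_GU (R : idomainType) (K : fieldType) (r : {rmorphism R -> K})
    (s : {rmorphism R -> R}) (p : R) l d1 d2 (xi1 : 'M[K]_d1) (xi2 : 'M[K]_d2) :
  is_dvr p -> r p = 0 -> involutive s -> s p = p -> ~~ (2%N \in [pchar K]) ->
  (0 < l)%N -> coprimep (char_poly xi1) (char_poly xi2) ->
  levi_statement r p l (fun n (g : 'M[R]_n) => GU_mem s p l g)
    (fun n (X : 'M[R]_n) => gu_mem s p l X) xi1 xi2.
Proof.
move=> dvr_p red_p s_inv s_p char_neq2 l_gt0 coprime_xi.
have unit_of_red := dvr_unit_of_red dvr_p red_p.
have unit2 := dvr_unit2 dvr_p red_p char_neq2.
have [p_neq0 _ _] := dvr_p.
apply: (levi_decomposition unit_of_red (dvr_dvd_of_red0 dvr_p) red_p unit2 l_gt0 coprime_xi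
  (inG := fun n (g : 'M[R]_n) => GU_mem s p l g)).
- exact: GU_mem1.
- exact: GU_mem_congmx.
- exact: GU_mem_diag.
- exact: GU_memM.
- exact: gu_mem_congmx.
- exact: gu_mem_diag.
- exact: gu_mem_conj.
- exact: GU_cayley.
Qed.

Theorem mainTheorem9
  (o O : idomainType) (K : finFieldType) (pi : o)
  (iota : {rmorphism o -> O}) (sigma : {rmorphism O -> O})
  (red : {rmorphism O -> K}) (l d1 d2 : nat)
  (xi1 : 'M[K]_d1) (xi2 : 'M[K]_d2) :
  (* o is a compact DVR with uniformiser pi *)
  is_dvr pi -> is_complete pi ->
  (* O/o is an unramified quadratic extension *)
  injective iota ->
  (exists e1 e2 : O, forall y : O,
     exists! ab : o * o, y = iota ab.1 * e1 + iota ab.2 * e2) ->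
  is_dvr (iota pi) ->
  (* sigma = x |-> x^o is the nontrivial Galois automorphism of O/o *)
  (forall x : o, sigma (iota x) = iota x) ->
  (forall y : O, sigma (sigma y) = y) ->
  (exists y : O, sigma y != y) ->
  (* red : O -> K = O / pi O is the residue map; K finite of odd char *)
  (forall k : K, exists y : O, red y = k) ->
  (forall y : O, red y = 0 <-> pdvd (iota pi) 1 y) ->
  ~~ (2%N \in [pchar K]) ->
  (0 < l)%N ->
  (* coprime characteristic polynomials in K[t] *)
  coprimep (char_poly xi1) (char_poly xi2) ->
  (* case G = GL_d *)
  ((exists X1 : 'M[o]_d1, map_mx (fun x => red (iota x)) X1 = xi1) ->
   (exists X2 : 'M[o]_d2, map_mx (fun x => red (iota x)) X2 = xi2) ->
   levi_statement (fun x => red (iota x)) pi l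
     (fun n (g : 'M[o]_n) => GL_mem pi l g)
     (fun n (X : 'M[o]_n) => gl_mem pi l X) xi1 xi2) /\
  (* case G = GU_d *)
  ((exists X1 : 'M[O]_d1, gu_mem sigma (iota pi) 1 X1 /\ map_mx red X1 = xi1) ->
   (exists X2 : 'M[O]_d2, gu_mem sigma (iota pi) 1 X2 /\ map_mx red X2 = xi2) ->
   levi_statement red (iota pi) l
     (fun n (g : 'M[O]_n) => GU_mem sigma (iota pi) l g)
     (fun n (X : 'M[O]_n) => gu_mem sigma (iota pi) l X) xi1 xi2).
Proof.
move=> dvr_o _ _ _ dvr_O sigma_iota sigma_inv _ _ red_ker char_neq2 l_gt0 coprime_xi.
have red_pi : red (iota pi) = 0 by apply/red_ker; exists 1; rewrite expr1 mulr1.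
split=> _ _.
  exact: (levi_GL (r := red \o iota) dvr_o red_pi char_neq2 l_gt0 coprime_xi).
exact: levi_GU dvr_O red_pi sigma_inv (sigma_iota pi) char_neq2 l_gt0 coprime_xi.
Qed.
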